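(* Fix $R\in\mathbb P_d$ and set $\operatorname{b}_R(P,Q):=\sqrt{\operatorname{B}_R(P,Q)}$ for $P,Q\in\mathbb P_d$. Then for all $P,Q,S\in\mathbb P_d$: (1) $\operatorname{b}_R(P,Q)=\operatorname{b}_R(Q,P)$; (2) $\operatorname{B}_R(P,Q)\ge 0$, so $\operatorname{b}_R(P,Q)\ge0$ is well-defined, and $\operatorname{b}_R(P,Q)=0$ if and only if $P=Q$; (3) $\operatorname{b}_R(P,Q)\le \operatorname{b}_R(P,S)+\operatorname{b}_R(S,Q)$.
   Context: $\mathbb P_d$ is the set of $d\times d$ complex positive definite matrices. The generalized fidelity is $\operatorname{F}_R(P,Q):=\operatorname{Tr}\big[\sqrt{R^{1/2}PR^{1/2}}\,R^{-1}\sqrt{R^{1/2}QR^{1/2}}\big]$ and the squared generalized Bures distance is $\operatorname{B}_R(P,Q):=\operatorname{Tr}[P+Q]-2\,\mathrm{Re}\,\operatorname{F}_R(P,Q)$. *)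

From HB Require Import structures.
From mathcomp Require Import all_boot all_order all_algebra.
From mathcomp Require Import reals complex.
From Stdlib Require Import ClassicalEpsilon.
Set Implicit Arguments. Unset Strict Implicit. Unset Printing Implicit Defensive.
Import Order.TTheory GRing.Theory Num.Theory.
Local Open Scope ring_scope.

Section Defs.
Variable C : numClosedFieldType.
Variable d : nat.

Definition adjmx (m n : nat) (A : 'M[C]_(m, n)) : 'M[C]_(n, m) :=
  (map_mx Num.conj A)^T.

Definition hermitian (A : 'M[C]_d) : Prop := adjmx A = A.

Definition psdmx (A : 'M[C]_d) : Prop :=
  hermitian A /\ forall x : 'cV[C]_d, 0 <= (adjmx x *m A *m x) 0 0.

Definition posdefmx (A : 'M[C]_d) : Prop :=
  hermitian A /\ forall x : 'cV[C]_d, x != 0 -> 0 < (adjmx x *m A *m x) 0 0.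

(* principal square root: the (unique) PSD matrix S with S S = A
   (for A PSD); an arbitrary value otherwise. *)
Definition sqrtmx (A : 'M[C]_d) : 'M[C]_d :=
  epsilon (inhabits 0) (fun S : 'M[C]_d => psdmx S /\ S *m S = A).

Definition fidR (R P Q : 'M[C]_d) : C :=
  \tr (sqrtmx (sqrtmx R *m P *m sqrtmx R) *m invmx R
        *m sqrtmx (sqrtmx R *m Q *m sqrtmx R)).

Definition buresR (R P Q : 'M[C]_d) : C :=
  \tr (P + Q) - 2%:R * 'Re (fidR R P Q).

Definition bR (R P Q : 'M[C]_d) : C := sqrtC (buresR R P Q).

End Defs.

(* With T := R^(1/2) and Y P := T^-1 (T P T)^(1/2) ([bures_factor]) one has
   Y P (Y P)^* = P and F_R(P, Q) = tr ((Y P)^* Y Q).  Expanding the Frobenius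
   norm then gives B_R(P, Q) = ||Y P - Y Q||^2, so b_R is the Frobenius distance
   pulled back along the injective map Y, and the metric axioms are inherited. *)
From Pilot Require Import Defs.
From HB Require Import structures.
From mathcomp Require Import all_boot all_order all_algebra.
From mathcomp Require Import reals complex.
From mathcomp Require Import sesquilinear spectral.
From Stdlib Require Import ClassicalEpsilon.
Import Order.TTheory GRing.Theory Num.Theory.
Set Implicit Arguments. Unset Strict Implicit. Unset Printing Implicit Defensive.
Local Open Scope ring_scope.

Lemma invmx_mul (F : fieldType) n (A B : 'M[F]_n) :
  A \in unitmx -> B \in unitmx -> invmx (A *m B) = invmx B *m invmx A.
Proof.
move=> uA uB; have uAB : A *m B \in unitmx by rewrite unitmx_mul uA.
have inv_l : invmx B *m invmx A *m (A *m B) = 1%:M.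
  by rewrite -mulmxA (mulmxA (invmx A)) mulVmx // mul1mx mulVmx.
by rewrite -[LHS]mul1mx -inv_l -mulmxA mulmxV // mulmx1.
Qed.

Section Adjoint.
Variable C : numClosedFieldType.

Lemma adjmxE m n (A : 'M[C]_(m, n)) : adjmx A = (A ^t* )%sesqui.
Proof. by rewrite /adjmx map_trmx. Qed.

Lemma adjmxK m n (A : 'M[C]_(m, n)) : adjmx (adjmx A) = A.
Proof. by rewrite !adjmxE trmxCK. Qed.

Lemma adjmxM m n p (A : 'M[C]_(m, n)) (B : 'M[C]_(n, p)) :
  adjmx (A *m B) = adjmx B *m adjmx A.
Proof. by rewrite /adjmx map_mxM trmx_mul. Qed.

Lemma adjmx_inv n (A : 'M[C]_n) : adjmx (invmx A) = invmx (adjmx A).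
Proof. by rewrite /adjmx map_invmx trmx_inv. Qed.

Lemma adjmx_delta n (i : 'I_n) :
  adjmx (delta_mx i 0 : 'cV[C]_n) = delta_mx 0 i.
Proof.
apply/matrixP=> a b; rewrite !mxE.
by case: (_ == _); case: (_ == _); rewrite /= ?conjC1 ?conjC0.
Qed.

Lemma adjmx_diag n (s : 'rV[C]_n) :
  (forall j, 0 <= s 0 j) -> adjmx (diag_mx s) = diag_mx s.
Proof.
move=> s_ge0; apply/matrixP=> i j; rewrite !mxE.
have [->|_] := eqVneq i j; last by rewrite !mulr0n conjC0.
by rewrite !mulr1n geC0_conj.
Qed.

End Adjoint.

Section PositiveMatrices.
Variables (C : numClosedFieldType) (n : nat).
Implicit Types A M T : 'M[C]_n.

Lemma posdefmx_psd A : posdefmx A -> psdmx A.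
Proof.
move=> [hA pA]; split=> // x; have [->|x0] := eqVneq x 0.
  by rewrite mulmx0 mxE.
exact/ltW/pA.
Qed.

Lemma posdefmx_unit A : posdefmx A -> A \in unitmx.
Proof.
move=> [_ pA]; rewrite unitmxE unitfE; apply/negP => /det0P [v v0 vA].
have v'0 : adjmx v != 0.
  apply: contra v0 => /eqP v'0; apply/eqP.
  by rewrite -[v]adjmxK v'0; apply/matrixP=> i j; rewrite !mxE conjC0.
by have := pA _ v'0; rewrite adjmxK vA mul0mx mxE ltxx.
Qed.

Lemma psdmx_hermitian_congr T M : Defs.hermitian T -> psdmx M -> psdmx (T *m M *m T).
Proof.
move=> hT [hM pM]; split; first by rewrite /Defs.hermitian !adjmxM hT hM mulmxA.
by move=> x; have := pM (T *m x); rewrite adjmxM hT !mulmxA.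
Qed.

Lemma psdmx_spectralE A : psdmx A ->
  A = (spectralmx A ^t* )%sesqui *m diag_mx (spectral_diag A) *m spectralmx A.
Proof.
move=> [hA _]; rewrite -invmx_unitary ?spectral_unitarymx //.
by apply/orthomx_spectralP/normalmxP; rewrite -adjmxE hA.
Qed.

Lemma psdmx_spectral_diag_ge0 A : psdmx A -> forall i, 0 <= spectral_diag A 0 i.
Proof.
move=> pA i; have eA := psdmx_spectralE pA.
set U := spectralmx A in eA *; set D := spectral_diag A in eA *.
have UU' : U *m (U ^t* )%sesqui = 1%:M := unitarymxP (spectral_unitarymx A).
have := pA.2 ((U ^t* )%sesqui *m delta_mx i 0).
rewrite adjmxM adjmx_delta adjmxE trmxCK eA !mulmxA.
rewrite -(mulmxA _ U) UU' mulmx1 -(mulmxA _ U) UU' mulmx1.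
by rewrite -rowE -colE !mxE eqxx mulr1n.
Qed.

Lemma psdmx_sqrt_exists A : psdmx A -> exists S, psdmx S /\ S *m S = A.
Proof.
move=> pA; have eA := psdmx_spectralE pA; have D_ge0 := psdmx_spectral_diag_ge0 pA.
set U := spectralmx A in eA *; set D := spectral_diag A in eA D_ge0 *.
have UU' : U *m (U ^t* )%sesqui = 1%:M := unitarymxP (spectral_unitarymx A).
pose s := \row_j sqrtC (D 0 j).
have s_ge0 j : 0 <= s 0 j by rewrite mxE sqrtC_ge0.
exists ((U ^t* )%sesqui *m diag_mx s *m U); split; last first.
  rewrite !mulmxA -(mulmxA _ U) UU' mulmx1 -(mulmxA (U ^t* )%sesqui) mulmx_diag.
  rewrite eA; congr (_ *m diag_mx _ *m _); apply/rowP=> j.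
  by rewrite !mxE -expr2 sqrtCK.
split; first by rewrite /Defs.hermitian !adjmxM mulmxA adjmx_diag // !adjmxE trmxCK.
move=> x; set y := U *m x.
have -> : adjmx x *m ((U ^t* )%sesqui *m diag_mx s *m U) *m x
          = adjmx y *m diag_mx s *m y by rewrite /y adjmxM !adjmxE -!mulmxA.
rewrite mul_mx_diag !mxE; apply: sumr_ge0 => i _; rewrite !mxE.
by rewrite mulrAC mulr_ge0 ?sqrtC_ge0 // mulrC mul_conjC_ge0.
Qed.

Lemma sqrtmxP A : psdmx A -> psdmx (sqrtmx A) /\ sqrtmx A *m sqrtmx A = A.
Proof.
move=> pA; exact: (epsilon_spec (inhabits 0)
  (fun S : 'M[C]_n => psdmx S /\ S *m S = A) (psdmx_sqrt_exists pA)).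
Qed.

End PositiveMatrices.

Section FrobeniusDistance.
Variable C : numClosedFieldType.

Lemma dotmx_mxvec m n (X Z : 'M[C]_(m, n)) :
  dotmx (mxvec X) (mxvec Z) = \tr (adjmx Z *m X).
Proof.
rewrite dotmxE mxE.
rewrite (reindex (fun p : 'I_m * 'I_n => mxvec_index p.1 p.2)); last first.
  have [g gK Kg] := curry_mxvec_bij m n.
  exists g => [[i j] _|k _]; first exact: (gK (i, j)).
  by have := Kg k isT; case: (g k).
rewrite /mxtrace; under [RHS]eq_bigr do rewrite mxE.
rewrite [RHS]exchange_big pair_big /=.
by apply: eq_bigr => -[i j] _ /=; rewrite mxvecE /adjmx !mxE mxvecE mulrC.
Qed.

Definition frobdist m n (X Z : 'M[C]_(m, n)) : C :=
  sqrtC (dotmx (mxvec X - mxvec Z) (mxvec X - mxvec Z)).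

Lemma frobdist_ge0 m n (X Z : 'M[C]_(m, n)) : 0 <= frobdist X Z.
Proof. exact: sqrt_dnorm_ge0. Qed.

Lemma frobdistC m n (X Z : 'M[C]_(m, n)) : frobdist X Z = frobdist Z X.
Proof. by rewrite /frobdist -opprB -scaleN1r dnormZ normrN1 expr1n mul1r. Qed.

Lemma frobdist_eq0 m n (X Z : 'M[C]_(m, n)) : (frobdist X Z == 0) = (X == Z).
Proof. by rewrite sqrt_dnorm_eq0 subr_eq0 (can_eq mxvecK). Qed.

Lemma frobdist_triangle m n (X Y Z : 'M[C]_(m, n)) :
  frobdist X Z <= frobdist X Y + frobdist Y Z.
Proof.
rewrite /frobdist.
have -> : mxvec X - mxvec Z = (mxvec X - mxvec Y) + (mxvec Y - mxvec Z).
  by rewrite addrA subrK.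
exact: (triangle_lerif (@dotmx C _) _ _).1.
Qed.

End FrobeniusDistance.

Section BuresFactor.
Variables (C : numClosedFieldType) (n : nat) (R : 'M[C]_n).
Hypothesis pR : posdefmx R.

Let T := sqrtmx R.
Let hT : Defs.hermitian T := (sqrtmxP (posdefmx_psd pR)).1.1.
Let TT : T *m T = R := (sqrtmxP (posdefmx_psd pR)).2.

Let T_unit : T \in unitmx.
Proof. by have := posdefmx_unit pR; rewrite -TT unitmx_mul => /andP[]. Qed.

Let invR : invmx R = invmx T *m invmx T.
Proof. by rewrite -TT invmx_mul. Qed.

Definition bures_factor P : 'M[C]_n :=
  invmx (sqrtmx R) *m sqrtmx (sqrtmx R *m P *m sqrtmx R).

Lemma bures_factor_adj P : posdefmx P -> bures_factor P *m adjmx (bures_factor P) = P.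
Proof.
move=> pP; have [[hS _] SS] := sqrtmxP (psdmx_hermitian_congr hT (posdefmx_psd pP)).
rewrite /bures_factor -/T adjmxM adjmx_inv hT hS mulmxA -(mulmxA (invmx T)) SS.
by rewrite !mulmxA mulVmx // mul1mx -mulmxA mulmxV // mulmx1.
Qed.

Lemma bures_factor_inj P Q : posdefmx P -> posdefmx Q ->
  bures_factor P = bures_factor Q -> P = Q.
Proof. by move=> pP pQ e; rewrite -(bures_factor_adj pP) e bures_factor_adj. Qed.

Lemma fidR_bures_factor P Q : posdefmx P ->
  fidR R P Q = \tr (adjmx (bures_factor P) *m bures_factor Q).
Proof.
move=> pP; have [[hS _] _] := sqrtmxP (psdmx_hermitian_congr hT (posdefmx_psd pP)).
by rewrite /fidR /bures_factor -/T adjmxM adjmx_inv hT hS invR !mulmxA.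
Qed.

Lemma mxtrace_bures_factor P : posdefmx P ->
  \tr P = dotmx (mxvec (bures_factor P)) (mxvec (bures_factor P)).
Proof. by move=> pP; rewrite dotmx_mxvec mxtrace_mulC bures_factor_adj. Qed.

Lemma buresR_frobdist P Q : posdefmx P -> posdefmx Q ->
  buresR R P Q = frobdist (bures_factor P) (bures_factor Q) ^+ 2.
Proof.
move=> pP pQ; rewrite /buresR mxtraceD !mxtrace_bures_factor //.
rewrite fidR_bures_factor // -dotmx_mxvec /frobdist sqrtCK dnormB.
set z := dotmx (mxvec (bures_factor P)) (mxvec (bures_factor Q)).
have -> : dotmx (mxvec (bures_factor Q)) (mxvec (bures_factor P)) = z^*.
  by rewrite /z hermC /= expr0 mul1r.
by rewrite Re_conj ReE mulrC divfK // pnatr_eq0.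
Qed.

Lemma bR_frobdist P Q : posdefmx P -> posdefmx Q ->
  bR R P Q = frobdist (bures_factor P) (bures_factor Q).
Proof.
by move=> pP pQ; rewrite /bR buresR_frobdist // sqrCK // frobdist_ge0.
Qed.

Lemma bR_sym P Q : posdefmx P -> posdefmx Q -> bR R P Q = bR R Q P.
Proof. by move=> pP pQ; rewrite !bR_frobdist // frobdistC. Qed.

Lemma buresR_ge0 P Q : posdefmx P -> posdefmx Q -> 0 <= buresR R P Q.
Proof. by move=> pP pQ; rewrite buresR_frobdist // exprn_ge0 // frobdist_ge0. Qed.

Lemma bR_eq0 P Q : posdefmx P -> posdefmx Q -> bR R P Q = 0 <-> P = Q.
Proof.
move=> pP pQ; rewrite bR_frobdist //; split=> [/eqP|->].
  by rewrite frobdist_eq0 => /eqP; exact: bures_factor_inj.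
by apply/eqP; rewrite frobdist_eq0.
Qed.

Lemma bR_triangle P Q S : posdefmx P -> posdefmx Q -> posdefmx S ->
  bR R P Q <= bR R P S + bR R S Q.
Proof. by move=> pP pQ pS; rewrite !bR_frobdist //; exact: frobdist_triangle. Qed.

End BuresFactor.

Local Open Scope complex_scope.

Theorem mainTheorem3 (RR : realType) (d : nat) (R : 'M[RR[i]]_d) :
  posdefmx R ->
  forall P Q S : 'M[RR[i]]_d,
    posdefmx P -> posdefmx Q -> posdefmx S ->
    [/\ bR R P Q = bR R Q P,
        0 <= buresR R P Q /\ (bR R P Q = 0 <-> P = Q) &
        bR R P Q <= bR R P S + bR R S Q].
Proof.
move=> pR P Q S pP pQ pS; split.
- exact: (bR_sym pR pP pQ).
- exact: conj (buresR_ge0 pR pP pQ) (bR_eq0 pR pP pQ).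
- exact: (bR_triangle pR pP pQ pS).
Qed.
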